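(* Let $G$ be a graph on $d+2$ vertices with adjacency matrix $A_G$ having eigenvalues $\lambda_1\geq\lambda_2\geq\dots\geq\lambda_{d+2}$, and let $k>1$ with $\overline{B_G}=\frac{1}{k^2-1}I-A_G$. Suppose that $w^T\overline{B_G}w\geq 0$ for all $w\in\mathbf{1}^\perp$, that there exist a nonzero $w\in\mathbf{1}^\perp$ and a real $\gamma$ with $\overline{B_G}w=\gamma\mathbf{1}$, and that $\det(\overline{B_G})=0$. If $\lambda_1>\lambda_2$, then every eigenvector of $A_G$ with eigenvalue $\lambda_2$ lies in $\mathbf{1}^\perp$. If $\lambda_1=\lambda_2$, then a basis of the $\lambda_2$-eigenspace of $A_G$ can be chosen so that all but one of its vectors lie in $\mathbf{1}^\perp$.
   Context: Graphs are finite and simple; $\mathbf{1}$ is the all-ones vector and $\mathbf{1}^\perp$ its orthogonal complement. *)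

From HB Require Import structures.
From mathcomp Require Import all_boot all_order all_algebra.
From mathcomp Require Import reals.
Set Implicit Arguments. Unset Strict Implicit. Unset Printing Implicit Defensive.
Import Order.TTheory GRing.Theory Num.Theory.
Local Open Scope ring_scope.

Definition simple_graph (n : nat) (e : rel 'I_n) : Prop :=
  symmetric e /\ irreflexive e.

Definition adjmx (R : nzRingType) (n : nat) (e : rel 'I_n) : 'M[R]_n :=
  \matrix_(i, j) (e i j)%:R.

Definition ones (R : nzRingType) (n : nat) : 'rV[R]_n := const_mx 1.
Definition in_ones_perp (R : nzRingType) (n : nat) (w : 'rV[R]_n) : bool :=
  \sum_i w 0 i == 0.

(* Quadratic form w^T M w (vectors are row vectors, so this is w M w^T). *)
Definition qform (R : nzRingType) (n : nat) (M : 'M[R]_n) (w : 'rV[R]_n) : R :=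
  (w *m M *m w^T) 0 0.

Definition Bbar (R : realType) (n : nat) (e : rel 'I_n) (k : R) : 'M[R]_n :=
  (k ^+ 2 - 1)^-1%:M - adjmx R e.

(* Write B = c I - A with c = 1/(k^2-1); since det B = 0, c is an eigenvalue
   of A.  If c were the simple top eigenvalue lam1, B would be positive
   semidefinite, so the solution w of B w = gamma 1 with w in 1^perp has
   w^T B w = 0, hence B w = 0.  As A is entrywise nonnegative, the positive part
   of w is then another eigenvector for lam1, independent of w because its
   coordinate sum is positive: this contradicts simplicity.  So c <= lam2 < lam1.
   If an eigenvector v for lam2 had nonzero sum, the combination of v and a top
   eigenvector lying in 1^perp would have negative B-energy.  The case
   lam1 = lam2 is linear algebra: any basis can be modified so that all but one
   of its vectors have coordinate sum 0. *)

From HB Require Import structures.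
From mathcomp Require Import all_boot all_order all_algebra.
From mathcomp Require Import reals.
From mathcomp Require Import ring lra.
Import Order.TTheory GRing.Theory Num.Theory.
Local Open Scope ring_scope.

Set Implicit Arguments. Unset Strict Implicit. Unset Printing Implicit Defensive.

Section DotProduct.
Variables (R : realFieldType) (n : nat).
Implicit Types (u v w : 'rV[R]_n) (A : 'M[R]_n).

Definition dotmx u v : R := (u *m v^T) 0 0.

Lemma dotmxE u v : dotmx u v = \sum_i u 0 i * v 0 i.
Proof. by rewrite /dotmx mxE; apply: eq_bigr => i _; rewrite mxE. Qed.

Lemma dotmxC u v : dotmx u v = dotmx v u.
Proof. by rewrite !dotmxE; apply: eq_bigr => i _; rewrite mulrC. Qed.

Lemma dotmxDl u v w : dotmx (u + v) w = dotmx u w + dotmx v w.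
Proof. by rewrite /dotmx mulmxDl mxE. Qed.

Lemma dotmxZl a u w : dotmx (a *: u) w = a * dotmx u w.
Proof. by rewrite /dotmx -scalemxAl mxE. Qed.

Lemma dotmxNl u w : dotmx (- u) w = - dotmx u w.
Proof. by rewrite -scaleN1r dotmxZl mulN1r. Qed.

Lemma dotmxDr u v w : dotmx w (u + v) = dotmx w u + dotmx w v.
Proof. by rewrite dotmxC dotmxDl !(dotmxC w). Qed.

Lemma dotmxZr a u w : dotmx w (a *: u) = a * dotmx w u.
Proof. by rewrite dotmxC dotmxZl dotmxC. Qed.

Lemma dotmxNr u w : dotmx w (- u) = - dotmx w u.
Proof. by rewrite dotmxC dotmxNl dotmxC. Qed.

Lemma dotmx_suml (I : finType) (f : I -> 'rV[R]_n) w :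
  dotmx (\sum_i f i) w = \sum_i dotmx (f i) w.
Proof. by rewrite /dotmx mulmx_suml summxE. Qed.

Lemma dotmx_sumr (I : finType) (f : I -> 'rV[R]_n) w :
  dotmx w (\sum_i f i) = \sum_i dotmx w (f i).
Proof. by rewrite dotmxC dotmx_suml; apply: eq_bigr => i _; rewrite dotmxC. Qed.

Lemma dotmx0l w : dotmx 0 w = 0.
Proof. by rewrite /dotmx mul0mx mxE. Qed.

Lemma dotmx0r w : dotmx w 0 = 0.
Proof. by rewrite dotmxC dotmx0l. Qed.

Lemma dotmxx_ge0 u : 0 <= dotmx u u.
Proof. by rewrite dotmxE; apply: sumr_ge0 => i _; rewrite -expr2 sqr_ge0. Qed.

Lemma dotmxx_eq0 u : (dotmx u u == 0) = (u == 0).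
Proof.
apply/eqP/eqP => [|->]; last exact: dotmx0l.
rewrite dotmxE => /psumr_eq0P u0; apply/rowP => i; rewrite mxE.
by apply/eqP; rewrite -sqrf_eq0 expr2 u0 // => j _; rewrite -expr2 sqr_ge0.
Qed.

Lemma dotmxx_gt0 u : (0 < dotmx u u) = (u != 0).
Proof. by rewrite lt_def dotmxx_ge0 dotmxx_eq0 andbT. Qed.

Lemma dotmx_mulmx_sym u v A : A^T = A -> dotmx (u *m A) v = dotmx u (v *m A).
Proof. by move=> sA; rewrite /dotmx trmx_mul sA mulmxA. Qed.

End DotProduct.

Section LinearAlgebra.
Variable F : fieldType.

Lemma coprimep_prodr (p : {poly F}) (I : finType) (P : pred I) (G : I -> {poly F}) :
  (forall j, P j -> coprimep p (G j)) -> coprimep p (\prod_(j | P j) G j).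
Proof.
move=> pG; apply: (big_ind (coprimep p)) => //; first exact: coprimep1.
by move=> x y; rewrite coprimepMr => ->.
Qed.

Lemma eigenvalue_det_eq0 n (A : 'M[F]_n) a :
  \det (a%:M - A) = 0 -> eigenvalue A a.
Proof.
move/eqP/det0P => [v vnz]; rewrite mulmxBr mul_mx_scalar => /eqP.
by rewrite subr_eq0 => /eqP vA; apply/eigenvalueP; exists v.
Qed.

Lemma eigenvalue_prod_XsubC n (A : 'M[F]_n) (lam : 'I_n -> F) a :
  char_poly A = \prod_i ('X - (lam i)%:P) ->
  eigenvalue A a = [exists i, a == lam i].
Proof.
rewrite eigenvalue_root_char /root => ->; rewrite horner_prod.
apply/prodf_eq0/existsP => -[i].
  by rewrite hornerXsubC subr_eq0 => _ ai; exists i.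
by move=> ai; exists i; rewrite // hornerXsubC subr_eq0.
Qed.

Lemma XsubC_sqr_ndvd_prod n (lam : 'I_n.+1 -> F) :
  (forall i : 'I_n, lam (lift ord0 i) != lam ord0) ->
  ~~ (('X - (lam ord0)%:P) ^+ 2 %| \prod_i ('X - (lam i)%:P)).
Proof.
move=> lam_neq; rewrite big_ord_recl expr2 dvdp_mul2l ?polyXsubC_eq0 //.
rewrite dvdp_XsubCl /root horner_prod; apply/prodf_eq0 => -[i _].
by rewrite hornerXsubC subr_eq0 eq_sym (negPf (lam_neq i)).
Qed.

Lemma char_poly_conj n (A U : 'M[F]_n) : U \in unitmx ->
  char_poly (U *m A *m invmx U) = char_poly A.
Proof.
move=> Uu; have char_conj : char_poly_mx (U *m A *m invmx U) =
    map_mx polyC U *m char_poly_mx A *m map_mx polyC (invmx U).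
  rewrite /char_poly_mx !map_mxM mulmxBr mulmxBl mul_mx_scalar -scalemxAl.
  by congr (_ - _); rewrite -map_mxM (mulmxV Uu) map_mx1 scalemx1.
rewrite /char_poly char_conj !det_mulmx !det_map_mx mulrC mulrA -rmorphM.
by rewrite -det_mulmx mulVmx // det1 rmorph1 mul1r.
Qed.

Lemma char_poly_scalar_mx r (mu : F) : char_poly (mu%:M : 'M_r) = ('X - mu%:P) ^+ r.
Proof.
rewrite char_poly_trig ?scalar_mx_is_trig //.
under eq_bigr do rewrite mxE eqxx.
by rewrite prodr_const card_ord.
Qed.

Lemma eigenvectors_char_poly_dvd r d (A : 'M[F]_(r + d)) (V : 'M[F]_(r, r + d)) mu :
  row_free V -> V *m A = mu *: V -> ('X - mu%:P) ^+ r %| char_poly A.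
Proof.
move=> /eqnP rV VA; have EV := mulmx_ebase V; rewrite rV in EV.
have Lu := col_ebase_unit V; have Uu := row_ebase_unit V.
set L := col_ebase V in EV Lu; set U := row_ebase V in EV Uu.
set A' := U *m A *m invmx U.
have PA : pid_mx r *m A' = mu *: (pid_mx r : 'M_(r, r + d)).
  move: VA; rewrite -EV -!mulmxA scalemxAr => /(congr1 (mulmx (invmx L))).
  rewrite !(mulKmx Lu) => /(congr1 (mulmx^~ (invmx U))).
  by rewrite /A' -scalemxAl !mulmxA (mulmxK Uu).
have [ul ur] : ulsubmx A' = mu%:M /\ ursubmx A' = 0.
  move: PA; rewrite -[A']submxK pid_mx_row mul_row_block !mul1mx !mul0mx.
  rewrite !addr0 scale_row_mx scaler0 scalemx1 => /eq_row_mx [-> ->].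
  by rewrite block_mxKul block_mxKur.
rewrite -(char_poly_conj A Uu) -/A' -[A']submxK ul ur.
rewrite /char_poly /char_poly_mx map_block_mx /= !map_mx0 scalar_mx_block.
rewrite opp_block_mx add_block_mx oppr0 addr0 det_lblock.
by apply: dvdp_mulr; rewrite -char_poly_scalar_mx.
Qed.

Lemma row_free_sum_neq0_sum0 n (p w : 'rV[F]_n) :
  \sum_i p 0 i != 0 -> \sum_i w 0 i = 0 -> w != 0 -> row_free (col_mx p w).
Proof.
move=> sp sw wnz; apply: inj_row_free => x.
rewrite -[x]hsubmxK mul_row_col (mx11_scalar (lsubmx x)) (mx11_scalar (rsubmx x)).
rewrite !mul_scalar_mx; set a := lsubmx x 0 0; set b := rsubmx x 0 0 => xpw.
have a0 : a = 0.
  have : \sum_i (a *: p + b *: w) 0 i = 0.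
    by rewrite xpw big1 // => i _; rewrite mxE.
  under eq_bigr do rewrite !mxE.
  rewrite big_split /= -!mulr_sumr sw mulr0 addr0 => /eqP.
  by rewrite mulf_eq0 (negPf sp) orbF => /eqP.
have b0 : b = 0.
  by move/eqP: xpw; rewrite a0 scale0r add0r scaler_eq0 (negPf wnz) orbF => /eqP.
by rewrite a0 b0 !raddf0 row_mx0.
Qed.

Lemma row_base_ones_perp_but_one n (E : 'M[F]_n) : (0 < \rank E)%N ->
  exists (B : 'M[F]_(\rank E, n)) (j : 'I_(\rank E)),
    [/\ row_free B, (B == E)%MS & forall i, i != j -> in_ones_perp (row i B)].
Proof.
move=> rE; have Bb_free := row_base_free E; have BbE := eq_row_base E.
set Bb := row_base E in Bb_free BbE; clearbody Bb; pose sg i := \sum_k Bb i k.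
have perpE (B : 'M[F]_(\rank E, n)) i :
    in_ones_perp (row i B) = (\sum_k B i k == 0).
  by rewrite /in_ones_perp; under eq_bigr do rewrite mxE.
have [j sj|sg0] := pickP (fun j => sg j != 0); last first.
  exists Bb, (Ordinal rE); split=> //; first exact/eqmxP.
  by move=> i _; rewrite perpE; apply: negbFE (sg0 i).
pose a i := if i == j then 0 else - (sg i / sg j).
pose B := \matrix_i (row i Bb + a i *: row j Bb).
have rowB i : row i B = row i Bb + a i *: row j Bb by rewrite rowK.
have rowBj : row j B = row j Bb by rewrite rowB /a eqxx scale0r addr0.
have BBb : (B == Bb)%MS.
  apply/andP; split; apply/row_subP => i.
    by rewrite rowB addmx_sub ?scalemx_sub ?row_sub.
  have -> : row i Bb = row i B + (- a i) *: row j B.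
    by rewrite rowB rowBj scaleNr addrK.
  by rewrite addmx_sub ?scalemx_sub ?row_sub.
exists B, j; split.
- by rewrite /row_free (eqmx_rank BBb).
- by apply/eqmxP; apply: eqmx_trans (eqmxP BBb) BbE.
- move=> i ij; rewrite perpE.
  under eq_bigr do rewrite !mxE.
  by rewrite /a (negPf ij) big_split /= -mulr_sumr mulNr divfK // subrr.
Qed.

End LinearAlgebra.

Section SymmetricReal.
Variable R : realFieldType.

Lemma eigenvector_sym_orthogonal n (A : 'M[R]_n) (u v : 'rV[R]_n) a b :
  A^T = A -> u *m A = a *: u -> v *m A = b *: v -> a != b -> dotmx u v = 0.
Proof.
move=> sA uA vA ab; have := dotmx_mulmx_sym u v sA.
rewrite uA vA dotmxZl dotmxZr => /eqP; rewrite -subr_eq0 -mulrBl mulf_eq0.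
by rewrite subr_eq0 (negPf ab) => /eqP.
Qed.

Lemma mulmx_sym_expS_eq0 n (S : 'M[R]_n.+1) (x : 'rV[R]_n.+1) m :
  S^T = S -> x *m S ^+ m.+1 = 0 -> x *m S = 0.
Proof.
move=> sS; have trS k : (S ^+ k)^T = S ^+ k.
  elim: k => [|k IH]; first by rewrite !expr0 trmx1.
  by rewrite exprS -mulmxE trmx_mul IH sS mulmxE -exprSr exprS.
elim: m => [|m IH]; first by rewrite expr1.
move=> xSm; apply: IH; apply/eqP; rewrite -dotmxx_eq0 /dotmx trmx_mul trS.
rewrite mulmxA -[x *m _ *m _]mulmxA mulmxE -exprD addnS -addSn exprD.
by rewrite -mulmxE mulmxA xSm !mul0mx mxE.
Qed.

Lemma sym_gen_eigenvector n (A : 'M[R]_n.+1) a m (v : 'rV[R]_n.+1) :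
  A^T = A -> (v <= kermxpoly A (('X - a%:P) ^+ m))%MS -> v *m A = a *: v.
Proof.
move=> sA /sub_kermxP; rewrite rmorphXn rmorphB /= horner_mx_X horner_mx_C.
case: m => [|m]; first by rewrite expr0 mulmx1 => ->; rewrite mul0mx scaler0.
move/mulmx_sym_expS_eq0; rewrite linearB /= sA tr_scalar_mx => /(_ erefl).
by rewrite mulmxBr mul_mx_scalar => /eqP; rewrite subr_eq0 => /eqP.
Qed.

Lemma sym_eigen_decomposition n (A : 'M[R]_n.+1) (lam : 'I_n.+1 -> R)
    (u : 'rV[R]_n.+1) :
  A^T = A -> char_poly A = \prod_i ('X - (lam i)%:P) ->
  exists v : 'I_n.+1 -> 'rV[R]_n.+1,
    [/\ u = \sum_i v i, forall i, v i *m A = lam i *: v i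
      & forall i j, i != j -> dotmx (v i) (v j) = 0].
Proof.
move=> sA cA.
(* [rep j] is a canonical index carrying the eigenvalue [lam j]; grouping the
   linear factors of [char_poly A] by [rep] makes the groups pairwise coprime. *)
pose rep j := odflt j [pick k | lam k == lam j].
have lam_rep j : lam (rep j) = lam j by rewrite /rep; case: pickP => [k /eqP|].
have rep_eq j j' : lam j = lam j' -> rep j = rep j'.
  move=> ejj'; rewrite /rep (@eq_pick _ _ [pred k | lam k == lam j']).
    by case: pickP => [//|/(_ j')]; rewrite /= eqxx.
  by move=> k; rewrite /= ejj'.
pose F i := \prod_(j | rep j == i) ('X - (lam j)%:P).
have F_pow i : exists m, F i = ('X - (lam i)%:P) ^+ m.
  apply: (big_ind (fun p => exists m, p = _ ^+ m)).
  - by exists 0%N.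
  - by move=> p q [a ->] [b ->]; exists (a + b)%N; rewrite exprD.
  - by move=> j /eqP <-; exists 1%N; rewrite lam_rep.
have F_coprime : {in predT &, forall i k, k != i -> coprimep (F i) (F k)}.
  move=> i k _ _ ki; apply: coprimep_prodr => j' /eqP rj'.
  rewrite coprimep_sym; apply: coprimep_prodr => j /eqP rj.
  rewrite coprimep_XsubC root_XsubC; apply: contra ki => /eqP/rep_eq.
  by rewrite rj rj' => ->.
have /sub_sumsmxP [u_ uE] : (u <= \sum_i kermxpoly A (F i))%MS.
  have cF : char_poly A = \prod_i F i by rewrite cA (partition_big rep predT).
  rewrite -(kermxpoly_prod _ F_coprime) -cF.
  by rewrite /kermxpoly Cayley_Hamilton kermx0 submx1.
pose v i := u_ i *m kermxpoly A (F i).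
have v_eig i : v i *m A = lam i *: v i.
  have [m Fm] := F_pow i.
  by apply: (sym_gen_eigenvector (m := m)); rewrite // -Fm submxMl.
have v_rep i : v i != 0 -> rep i = i.
  case: (pickP (fun j => rep j == i)) => [j /eqP <- _ | noj].
    by apply: rep_eq; rewrite lam_rep.
  by rewrite /v /F big_pred0 // kermxpoly1 mulmx0 eqxx.
exists v; split => // i k ik.
have [->|/v_rep ri] := eqVneq (v i) 0; first exact: dotmx0l.
have [->|/v_rep rk] := eqVneq (v k) 0; first exact: dotmx0r.
apply: eigenvector_sym_orthogonal sA (v_eig i) (v_eig k) _.
by apply: contra ik => /eqP/rep_eq; rewrite ri rk => ->.
Qed.

Lemma sym_rayleigh_le n (A : 'M[R]_n.+1) (lam : 'I_n.+1 -> R) mu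
    (u : 'rV[R]_n.+1) :
  A^T = A -> char_poly A = \prod_i ('X - (lam i)%:P) -> (forall i, lam i <= mu) ->
  dotmx (u *m A) u <= mu * dotmx u u.
Proof.
move=> sA cA le_mu; have [v [-> v_eig v_orth]] := sym_eigen_decomposition u sA cA.
have dot_v i : dotmx (v i) (\sum_k v k) = dotmx (v i) (v i).
  rewrite dotmx_sumr (bigD1 i) //= big1 ?addr0 // => k ki.
  by rewrite v_orth // eq_sym.
rewrite mulmx_suml !dotmx_suml mulr_sumr; apply: ler_sum => i _.
rewrite dotmxC v_eig dotmxZr dotmxC dot_v.
by rewrite ler_wpM2r ?dotmxx_ge0.
Qed.

Lemma quadratic_ge0_lin_eq0 (a b : R) :
  0 <= b -> (forall t, 0 <= 2 * t * a + t ^+ 2 * b) -> a = 0.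
Proof.
move=> b0 ge0; have b1 : b + 1 != 0 by rewrite gt_eqF // ltr_pwDr.
(* For t = -a/(b+1) the quadratic equals -t^2 (b+2). *)
have [t a_t] : exists t, a = - t * (b + 1).
  by exists (- a / (b + 1)); rewrite mulNr divfK // opprK.
have := ge0 t; rewrite a_t => ge0t.
have t0 : t = 0 by nra.
by rewrite t0 oppr0 mul0r.
Qed.

Lemma psd_sym_radical n (M : 'M[R]_n) (w : 'rV[R]_n) : M^T = M ->
  (forall z, 0 <= dotmx (z *m M) z) -> dotmx (w *m M) w = 0 -> w *m M = 0.
Proof.
move=> sM psd w0; set z := w *m M; apply/eqP; rewrite -dotmxx_eq0; apply/eqP.
apply: (quadratic_ge0_lin_eq0 (psd z)) => t.
have := psd (w + t *: z); rewrite mulmxDl -scalemxAl !dotmxDl !dotmxDr.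
rewrite !dotmxZl !dotmxZr -/z w0 (dotmx_mulmx_sym z w sM) -/z dotmxC.
by congr (0 <= _); ring.
Qed.

End SymmetricReal.

Section NonnegativeSymmetric.
Variable R : realFieldType.

Definition pos_part n (w : 'rV[R]_n) : 'rV[R]_n := map_mx (fun x => Num.max x 0) w.

Lemma pos_part_ge0 n (w : 'rV[R]_n) i : 0 <= pos_part w 0 i.
Proof. by rewrite mxE le_max lexx orbT. Qed.

Lemma pos_part_ge n (w : 'rV[R]_n) i : w 0 i <= pos_part w 0 i.
Proof. by rewrite mxE le_max lexx. Qed.

Lemma dotmx_pos_part n (w : 'rV[R]_n) :
  dotmx w (pos_part w) = dotmx (pos_part w) (pos_part w).
Proof.
rewrite !dotmxE; apply: eq_bigr => i _; rewrite !mxE.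
by case: (leP (w 0 i) 0) => [w0|/ltW w0]; rewrite ?max_r ?max_l ?mulr0.
Qed.

Lemma ler_dotmx_nnegr n (u u' p : 'rV[R]_n) :
  (forall i, u 0 i <= u' 0 i) -> (forall i, 0 <= p 0 i) -> dotmx u p <= dotmx u' p.
Proof.
by move=> uu' p0; rewrite !dotmxE; apply: ler_sum => i _; rewrite ler_wpM2r.
Qed.

Lemma pos_part_top_eigenvector n (A : 'M[R]_n) c (w : 'rV[R]_n) :
  A^T = A -> (forall i j, 0 <= A i j) ->
  (forall z, 0 <= dotmx (z *m (c%:M - A)) z) ->
  w *m A = c *: w -> pos_part w *m A = c *: pos_part w.
Proof.
move=> sA A0 psd wA; set p := pos_part w.
(* c |p|^2 = <wA, p> <= <pA, p> because A >= 0, w <= p and p >= 0. *)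
have BE z : z *m (c%:M - A) = c *: z - z *m A by rewrite mulmxBr mul_mx_scalar.
have sB : (c%:M - A)^T = c%:M - A by rewrite linearB /= sA tr_scalar_mx.
have pBp : dotmx (p *m (c%:M - A)) p = 0.
  apply/eqP; rewrite eq_le psd andbT BE dotmxDl dotmxNl dotmxZl subr_le0.
  rewrite -dotmx_pos_part -dotmxZl -wA; apply: ler_dotmx_nnegr => [j|]; last first.
    exact: pos_part_ge0.
  by rewrite !mxE; apply: ler_sum => i _; rewrite ler_wpM2r ?pos_part_ge.
by have /eqP := psd_sym_radical sB psd pBp; rewrite BE subr_eq0 => /eqP.
Qed.

Lemma pos_part_sum_gt0 n (w : 'rV[R]_n) :
  w != 0 -> \sum_i w 0 i = 0 -> 0 < \sum_i pos_part w 0 i.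
Proof.
move=> wnz sw; rewrite lt_def sumr_ge0 ?andbT => [|i _]; last exact: pos_part_ge0.
apply: contra_neq wnz => /psumr_eq0P p0; apply/rowP => i; rewrite mxE.
have {}p0 j : pos_part w 0 j = 0 by apply: p0 => // k _; apply: pos_part_ge0.
have w_le0 j : true -> 0 <= - w 0 j by rewrite oppr_ge0 -(p0 j) pos_part_ge.
apply/eqP; rewrite -oppr_eq0; apply/eqP; apply: (psumr_eq0P w_le0) => //.
by rewrite sumrN sw oppr0.
Qed.

Lemma top_eigenvector_sum_neq0 d (A : 'M[R]_(2 + d)) c (w : 'rV[R]_(2 + d)) :
  A^T = A -> (forall i j, 0 <= A i j) ->
  (forall z, 0 <= dotmx (z *m (c%:M - A)) z) ->
  ~~ (('X - c%:P) ^+ 2 %| char_poly A) ->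
  w != 0 -> w *m A = c *: w -> \sum_i w 0 i != 0.
Proof.
move=> sA A0 psd simple_c wnz wA; apply: contraNneq simple_c => sw.
have pA := pos_part_top_eigenvector sA A0 psd wA.
have VA : col_mx (pos_part w) w *m A = c *: col_mx (pos_part w) w.
  by rewrite mul_col_mx pA wA scale_col_mx.
apply: (eigenvectors_char_poly_dvd _ VA); apply: row_free_sum_neq0_sum0 => //.
by rewrite gt_eqF ?pos_part_sum_gt0.
Qed.

Lemma simple_top_shift_no_perp_solution d (A : 'M[R]_d.+2)
    (lam : 'I_d.+2 -> R) (w : 'rV[R]_d.+2) gamma :
  A^T = A -> (forall i j, 0 <= A i j) -> char_poly A = \prod_i ('X - (lam i)%:P) ->
  (forall i : 'I_d.+1, lam (lift ord0 i) < lam ord0) ->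
  w != 0 -> in_ones_perp w -> w *m ((lam ord0)%:M - A) != gamma *: ones R d.+2.
Proof.
move=> sA A_ge0 cA lam_lt wnz wperp; apply/eqP => wB; set c := lam ord0 in wB.
have lam_le i : lam i <= c.
  by rewrite /c; case: (unliftP ord0 i) => [j ->|->] //; apply/ltW/lam_lt.
have psdB z : 0 <= dotmx (z *m (c%:M - A)) z.
  rewrite mulmxBr mul_mx_scalar dotmxDl dotmxNl dotmxZl subr_ge0.
  exact: sym_rayleigh_le sA cA lam_le.
have sB : (c%:M - A)^T = c%:M - A by rewrite linearB /= sA tr_scalar_mx.
have wBw : dotmx (w *m (c%:M - A)) w = 0.
  rewrite wB dotmxZl dotmxE; under eq_bigr do rewrite mxE mul1r.
  by rewrite (eqP wperp) mulr0.
have /eqP := psd_sym_radical sB psdB wBw.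
rewrite mulmxBr mul_mx_scalar subr_eq0 eq_sym => /eqP wA.
have simple_c : ~~ (('X - c%:P) ^+ 2 %| char_poly A).
  by rewrite cA; apply: XsubC_sqr_ndvd_prod => i; rewrite lt_eqF ?lam_lt.
have := top_eigenvector_sum_neq0 sA A_ge0 psdB simple_c wnz wA.
by rewrite (eqP wperp) eqxx.
Qed.

Lemma eigenvector_perp_of_psd_on_perp n (A : 'M[R]_n) c l1 l2 (x v : 'rV[R]_n) :
  A^T = A -> c <= l2 -> l2 < l1 ->
  (forall u, in_ones_perp u -> 0 <= dotmx (u *m (c%:M - A)) u) ->
  x != 0 -> x *m A = l1 *: x -> v *m A = l2 *: v -> in_ones_perp v.
Proof.
move=> sA c_l2 l21 psd xnz xA vA; apply: contraT => sv.
set s := \sum_i v 0 i in sv; set s1 := \sum_i x 0 i.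
set u := s *: x - s1 *: v.
have u_perp : in_ones_perp u.
  rewrite /in_ones_perp (eq_bigr (fun i => s * x 0 i - s1 * v 0 i)) => [|i _].
    by rewrite sumrB -!mulr_sumr mulrC subrr.
  by rewrite !mxE.
have xv : dotmx x v = 0.
  by apply: (eigenvector_sym_orthogonal sA xA vA); rewrite gt_eqF.
have uBu : dotmx (u *m (c%:M - A)) u =
    s ^+ 2 * (c - l1) * dotmx x x + s1 ^+ 2 * (c - l2) * dotmx v v.
  rewrite mulmxBr mul_mx_scalar /u mulmxBl -!scalemxAl xA vA.
  rewrite !(dotmxDl, dotmxDr, dotmxNl, dotmxNr, dotmxZl, dotmxZr) xv dotmxC xv.
  by ring.
have x_term : 0 < s ^+ 2 * (l1 - c) * dotmx x x.
  have s2 : 0 < s ^+ 2 by rewrite lt_def sqr_ge0 sqrf_eq0 andbT.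
  by rewrite mulr_gt0 ?dotmxx_gt0 // mulr_gt0 // subr_gt0 (le_lt_trans c_l2).
have v_term : 0 <= s1 ^+ 2 * (l2 - c) * dotmx v v.
  by rewrite mulr_ge0 ?dotmxx_ge0 // mulr_ge0 ?sqr_ge0 ?subr_ge0.
have := psd u u_perp; rewrite uBu; lra.
Qed.

End NonnegativeSymmetric.

Theorem corollary4p5 (R : realType) (d : nat) (e : rel 'I_d.+2)
  (lam : 'I_d.+2 -> R) (k : R) :
  simple_graph e ->
  (* lam 0 >= lam 1 >= ... >= lam (d+1) are the eigenvalues of A_G, with multiplicity *)
  (forall i j : 'I_d.+2, (i <= j)%N -> lam j <= lam i) ->
  char_poly (adjmx R e) = \prod_(i < d.+2) ('X - (lam i)%:P) ->
  1 < k ->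
  (forall w : 'rV[R]_d.+2, in_ones_perp w -> 0 <= qform (Bbar e k) w) ->
  (exists (w : 'rV[R]_d.+2) (gamma : R),
      [/\ w != 0, in_ones_perp w & w *m (Bbar e k)^T = gamma *: ones R d.+2]) ->
  \det (Bbar e k) = 0 ->
  let lam1 := lam ord0 in
  let lam2 := lam (@Ordinal d.+2 1 isT) in
  (lam1 > lam2 ->
     forall v : 'rV[R]_d.+2, v != 0 -> v *m adjmx R e = lam2 *: v ->
       in_ones_perp v)
  /\
  (lam1 = lam2 ->
     exists (B : 'M[R]_(\rank (eigenspace (adjmx R e) lam2), d.+2)) (j : 'I_(\rank (eigenspace (adjmx R e) lam2))),
       [/\ row_free B, (B == eigenspace (adjmx R e) lam2)%MS
         & forall i, i != j -> in_ones_perp (row i B)]).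
Proof.
move=> [esym _] lam_sorted cA _ psd [w [gamma [wnz wperp wB]]] detB lam1 lam2.
set A := adjmx R e; set c := (k ^+ 2 - 1)^-1; rewrite -/A in cA.
have sA : A^T = A by apply/matrixP => i j; rewrite !mxE esym.
have A_ge0 i j : 0 <= A i j by rewrite mxE ler0n.
have lam_eig i : eigenvalue A (lam i).
  by rewrite (eigenvalue_prod_XsubC _ cA); apply/existsP; exists i.
split=> [lam12 v vnz vA|_]; last first.
  by apply: row_base_ones_perp_but_one; rewrite lt0n mxrank_eq0; apply: lam_eig.
have /existsP [ic /eqP c_ic] : [exists i, c == lam i].
  by rewrite -(eigenvalue_prod_XsubC _ cA); apply: eigenvalue_det_eq0.
have [ic0|ic_gt0] := eqVneq ic ord0.
  have sB : (Bbar e k)^T = Bbar e k by rewrite linearB /= sA tr_scalar_mx.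
  have lam_lt i : lam (lift ord0 i) < lam ord0.
    by rewrite (le_lt_trans _ lam12) // lam_sorted.
  have /negP[] :=
    simple_top_shift_no_perp_solution gamma sA A_ge0 cA lam_lt wnz wperp.
  by apply/eqP; rewrite -ic0 -c_ic -wB sB.
have /eigenvalueP [x xA xnz] := lam_eig ord0.
apply: (eigenvector_perp_of_psd_on_perp sA _ lam12 psd xnz xA vA).
rewrite -/c c_ic lam_sorted // lt0n.
by apply: contra_neq ic_gt0 => ic0; apply: val_inj.
Qed.
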